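(* Let $h\ge 2$ and let $D$ be a set of positive integers. Suppose there exist an integer $t$ with $2\le t\le 2h-1$ and positive integers $f_1,\dots,f_t$ with $f_1+\dots+f_t\le 2h$ such that $\sup_{m\ge 1} R_{f_1,\dots,f_t,D}(m)=\infty$. Then there exist an integer $t'$ with $2\le t'\le 2h-1$ and positive integers $f'_1,\dots,f'_{t'}$ with $f'_1+\dots+f'_{t'}\le 2h$ such that $\sup_{m\ge 1} R^{\mathrm{Dist}}_{f'_1,\dots,f'_{t'},D}(m)=\infty$.
   Context: For positive integers $f_1,\dots,f_t$, a set $D$ of positive integers and a positive integer $m$, $R_{f_1,\dots,f_t,D}(m)$ is the number of $t$-tuples $(d_1,\dots,d_t)$ of pairwise distinct elements of $D$ with $f_1d_1+\dots+f_td_t=m$, and $R^{\mathrm{Dist}}_{f_1,\dots,f_t,D}(m)$ is the largest integer $q\ge0$ such that there exist $qt$ pairwise distinct elements $d_1,\dots,d_{qt}\in D$ with $f_1d_{jt+1}+\dots+f_td_{jt+t}=m$ for every $0\le j\le q-1$. *)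

From mathcomp Require Import all_boot.
Set Implicit Arguments. Unset Strict Implicit. Unset Printing Implicit Defensive.

(* R_{f,D}(m): number of t-tuples (d_1..d_t) of pairwise distinct elements of D
   with f_1 d_1 + ... + f_t d_t = m.  Since all f_i, d_i >= 1, each d_i <= m,
   so tuples range over 'I_(m.+1). *)
Definition R (f : seq nat) (D : pred nat) (m : nat) : nat :=
  #|[set d : {ffun 'I_(size f) -> 'I_m.+1} |
      [&& injectiveb d, [forall i, D (d i)] &
          \sum_(i < size f) nth 0 f i * d i == m]]|.

(* There exist q*t pairwise distinct elements of D, arranged in q blocks
   (block j, position i <-> d_{jt+i+1}), each block satisfying the equation. *)
Definition has_dist (f : seq nat) (D : pred nat) (m q : nat) : bool :=
  [exists d : {ffun 'I_q * 'I_(size f) -> 'I_m.+1},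
    [&& injectiveb d, [forall k, D (d k)] &
        [forall j : 'I_q, \sum_(i < size f) nth 0 f i * d (j, i) == m]]].

(* R^Dist_{f,D}(m): the largest such q.  For t >= 1 and D of positive
   integers, any valid q satisfies q <= q*t <= m, so the max over q <= m
   is the true maximum (q = 0 is always valid). *)
Definition RDist (f : seq nat) (D : pred nat) (m : nat) : nat :=
  \max_(q < m.+1 | has_dist f D m q) q.

Definition unbounded (g : nat -> nat) : Prop :=
  forall N : nat, exists m : nat, 0 < m /\ N <= g m.

From Stdlib Require Import Classical.
From mathcomp Require Import all_boot.

Set Implicit Arguments. Unset Strict Implicit. Unset Printing Implicit Defensive.

(* If at most q solutions of f_1 d_1 + ... + f_t d_t = m can be chosen pairwise
   disjoint, pick them greedily: each pick discards only the solutions sharing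
   a value with it, i.e. at most t^2 times the number of solutions with a
   prescribed value in a prescribed position, and those are solutions of the
   equation with one coefficient deleted and a smaller right-hand side.  Hence
   R_f <= R^Dist_f * t^2 * max_i R_{f without f_i}, so by induction on t the
   function R_f is bounded as soon as R^Dist is bounded for every subsequence
   of f of length >= 2 (for t <= 1, R <= 1).  Subsequences of f still satisfy
   the constraints on the length and on the sum. *)

Lemma leq_card_bigcup (I T : finType) (A : I -> {set T}) :
  #|\bigcup_i A i| <= \sum_i #|A i|.
Proof.
elim/big_rec2: _ => [|i B n _ IH]; first by rewrite cards0.
by rewrite (leq_trans (leq_card_setU _ _)) // leq_add2l.
Qed.

Lemma leq_sumn_subseq s1 s2 : subseq s1 s2 -> sumn s1 <= sumn s2.
Proof.
elim: s2 s1 => [|y s2 IH] [|x s1] //= sub12.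
case: eqP sub12 => [<- | _] sub12; first by rewrite leq_add2l IH.
exact: leq_trans (IH _ sub12) (leq_addl _ _).
Qed.

Section DisjointRows.
Variables (T : finType) (t : nat).
Local Notation row := {ffun 'I_t -> T}.

Definition disjoint_rows (L : seq row) :=
  pairwise (fun d e : row => [disjoint codom d & codom e]) L.

Lemma exists_disjoint_rows (S : {set row}) C q :
  (forall i u, #|[set d in S | d i == u]| <= C) -> q * (t * t * C) < #|S| ->
  exists L, [/\ size L = q.+1, {subset L <= S} & disjoint_rows L].
Proof.
elim: q S => [|q IH] S fiberS bigS;
  have /set0Pn [d0 d0S] : S != set0 by rewrite -card_gt0 (leq_trans _ bigS).
  by exists [:: d0]; split => // d; rewrite inE => /eqP ->.
pose S' := [set d in S | [disjoint codom d & codom d0]].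
have subS' : S' \subset S by apply/subsetP => d; rewrite inE => /andP[].
have conflicts : #|S :\: S'| <= t * t * C.
  have : S :\: S' \subset \bigcup_(p : 'I_t * 'I_t) [set d in S | d p.2 == d0 p.1].
    apply/subsetP => d; rewrite !inE negb_and => /andP[+ dS].
    rewrite dS /= disjoint_has negbK => /hasP[_ /codomP[j ->] /codomP[i dj]].
    by apply/bigcupP; exists (i, j) => //; rewrite inE dS /= dj.
  move/subset_leq_card/leq_trans; apply; apply: leq_trans (leq_card_bigcup _) _.
  rewrite (@leq_trans (\sum_(p : 'I_t * 'I_t) C)) ?leq_sum //.
  by rewrite sum_nat_const card_prod !card_ord.
have bigS' : q * (t * t * C) < #|S'|.
  rewrite -(ltn_add2r (t * t * C)) -mulSnr (leq_trans bigS) //.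
  by rewrite -(cardsID S' S) (setIidPr subS') leq_add2l.
have fiberS' i u : #|[set d in S' | d i == u]| <= C.
  apply: leq_trans (fiberS i u); apply/subset_leq_card/subsetP => d.
  by rewrite !inE => /andP[/andP[-> _] ->].
have [L [sizeL subL disjL]] := IH S' fiberS' bigS'.
exists (d0 :: L); split => /=; first by rewrite sizeL.
  by move=> d; rewrite inE => /orP[/eqP -> // | /subL/(subsetP subS')].
apply/andP; split=> //; apply/allP => d /subL.
by rewrite inE disjoint_sym => /andP[].
Qed.

End DisjointRows.

Definition solutions n (c : nat -> nat) (D : pred nat) m
    : {set {ffun 'I_n -> 'I_m.+1}} :=
  [set d : {ffun 'I_n -> 'I_m.+1} |
    [&& injectiveb d, [forall i, D (d i)] & \sum_(i < n) c i * d i == m]].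

Lemma RE f D m : R f D m = #|solutions (size f) (nth 0 f) D m|.
Proof. by []. Qed.

Lemma eq_solutions n c c' D m : (forall k, k < n -> c k = c' k) ->
  solutions n c D m = solutions n c' D m.
Proof.
move=> eq_c; apply/setP => d; rewrite !inE; congr [&& _, _ & _ == m].
by apply: eq_bigr => i _; rewrite eq_c.
Qed.

Lemma R_le1 f D m : size f <= 1 -> R f D m <= 1.
Proof.
rewrite RE; case: (size f) => [|[|//]] _.
  by rewrite (leq_trans (max_card _)) // card_ffun !card_ord.
apply/card_le1_eqP => d d'; rewrite !inE !big_ord1.
move=> /and3P[_ _ /eqP sol] /and3P[_ _ /eqP sol']; apply/ffunP => x.
rewrite (ord1 x); apply: val_inj => /=.
have [c0 | c_pos] := posnP (nth 0 f 0).
  move: sol; rewrite c0 mul0n => m0; subst m.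
  move: (ltn_ord (d ord0)) (ltn_ord (d' ord0)).
  by rewrite !ltnS !leqn0 => /eqP -> /eqP ->.
by apply/eqP; rewrite -(eqn_pmul2l c_pos) sol sol'.
Qed.

(* Solutions with d_i = u, restricted to the other positions, are solutions
   of the shortened equation with right-hand side m - c_i u; positivity of
   the remaining coefficients keeps their values below that bound. *)
Lemma card_solutions_fiber n c D m (i : 'I_n.+1) (u : 'I_m.+1) :
  (forall k, k < n.+1 -> 0 < c k) ->
  #|[set d in solutions n.+1 c D m | d i == u]|
    <= #|solutions n (fun k => c (bump i k)) D (m - c i * u)|.
Proof.
move=> c_pos; set m' := m - c i * u; set A := [set d in _ | _].
have restrict d : d \in A -> [/\ d i = u,
    \sum_(k < n) c (bump i k) * d (lift i k) = m'
  & forall k : 'I_n, d (lift i k) <= m'].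
  rewrite !inE => /andP[/and3P[_ _ /eqP sum_d] /eqP di].
  have sum' : \sum_(k < n) c (bump i k) * d (lift i k) = m'.
    move: sum_d; rewrite (bigD1_ord i) //= di.
    by move/(congr1 (subn^~ (c i * u))); rewrite addKn.
  split=> // k; rewrite -sum' (bigD1 k) //= (leq_trans _ (leq_addr _ _)) //.
  exact: leq_pmull (c_pos _ (ltn_ord (lift i k))).
pose shorten (d : {ffun 'I_n.+1 -> 'I_m.+1}) : {ffun 'I_n -> 'I_m'.+1} :=
  [ffun k => inord (d (lift i k))].
have shortenE d (k : 'I_n) : d \in A -> shorten d k = d (lift i k) :> nat.
  by case/restrict => _ _ le_d; rewrite ffunE inordK // ltnS.
rewrite -(card_in_imset (f := shorten)); last first.
  move=> d d' dA d'A eq_dd'; have [di _ _] := restrict d dA.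
  have [d'i _ _] := restrict d' d'A.
  apply/ffunP => x; case: (unliftP i x) => [k|] ->; last by rewrite di d'i.
  by apply: val_inj; rewrite /= -shortenE // eq_dd' shortenE.
apply/subset_leq_card/subsetP => _ /imsetP[d dA ->].
have [_ sum_d _] := restrict d dA.
have := dA; rewrite !inE => /andP[/and3P[/injectiveP inj_d /forallP Dd _] _].
apply/and3P; split.
- apply/injectiveP => k k' /(congr1 val); rewrite /= !shortenE //.
  by move/val_inj/inj_d/lift_inj.
- by apply/forallP => k; rewrite shortenE.
- by apply/eqP; rewrite -[RHS]sum_d; apply: eq_bigr => k _; rewrite shortenE.
Qed.

Section RemNth.
Variable T : Type.

Definition rem_nth (s : seq T) i := take i s ++ drop i.+1 s.

Lemma size_rem_nth s i : i < size s -> size (rem_nth s i) = (size s).-1.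
Proof.
move=> lt_is; rewrite size_cat size_take lt_is size_drop.
by case: (size s) lt_is => // n; rewrite ltnS subSS => /subnKC.
Qed.

Lemma nth_rem_nth x0 s i k : i < size s ->
  nth x0 (rem_nth s i) k = nth x0 s (bump i k).
Proof.
move=> lt_is; rewrite nth_cat size_take lt_is /bump; case: ltnP => ki.
  by rewrite nth_take.
by rewrite nth_drop add1n addSn subnKC.
Qed.

End RemNth.

Lemma subseq_rem_nth (T : eqType) (s : seq T) i : subseq (rem_nth s i) s.
Proof.
rewrite /rem_nth -{3}(cat_take_drop i s) cat_subseq //.
by rewrite -add1n -drop_drop drop_subseq.
Qed.

Lemma R_rem_nth s D i m : i < size s ->
  R (rem_nth s i) D m = #|solutions (size s).-1 (fun k => nth 0 s (bump i k)) D m|.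
Proof.
move=> lt_is; rewrite RE size_rem_nth //.
rewrite (@eq_solutions _ _ (fun k => nth 0 s (bump i k))) // => k _.
exact: nth_rem_nth.
Qed.

Lemma has_dist_disjoint_rows f D m (L : seq {ffun 'I_(size f) -> 'I_m.+1}) :
  {subset L <= solutions (size f) (nth 0 f) D m} -> disjoint_rows L ->
  has_dist f D m (size L).
Proof.
move=> subL /(pairwiseP [ffun=> ord0]) disjL.
set row := nth [ffun=> ord0] L.
have solL (j : 'I_(size L)) : row j \in solutions (size f) (nth 0 f) D m.
  exact/subL/mem_nth.
apply/existsP; exists [ffun k : 'I_(size L) * 'I_(size f) => row k.1 k.2].
apply/and3P; split.
- apply/injectiveP => -[j i] [j' i']; rewrite !ffunE /= => eq_ji.
  have [ltjj' | ltj'j | /val_inj eq_jj'] := ltngtP j j'.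
  + have := disjL j j' (ltn_ord j) (ltn_ord j') ltjj'.
    by move/disjointFr/(_ (codom_f _ i)); rewrite eq_ji codom_f.
  + have := disjL j' j (ltn_ord j') (ltn_ord j) ltj'j.
    by move/disjointFr/(_ (codom_f _ i')); rewrite -eq_ji codom_f.
  + move: eq_ji (solL j); rewrite eq_jj' inE.
    by move=> eq_ji /and3P[/injectiveP inj_j _ _]; rewrite (inj_j _ _ eq_ji).
- apply/forallP => -[j i]; rewrite ffunE.
  by move: (solL j); rewrite inE => /and3P[_ /forallP].
- apply/forallP => j; under eq_bigr do rewrite ffunE /=.
  by move: (solL j); rewrite inE => /and3P[].
Qed.

Lemma has_dist_leq_RDist f D m q :
  2 <= size f -> has_dist f D m q -> q <= RDist f D m.
Proof.
move=> size_f dist_q; have q_le_m : q < m.+1.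
  have /existsP[d /and3P[/injectiveP inj_d _ _]] := dist_q.
  have := leq_card _ inj_d; rewrite card_prod !card_ord => card_le.
  have : q * 2 <= m.+1 by apply: leq_trans card_le; rewrite leq_mul2l size_f orbT.
  case: q {d inj_d card_le dist_q} => // q; rewrite muln2 -addnn addSn ltnS.
  exact: leq_trans (leq_addl q q.+1).
exact: (leq_bigmax_cond (Ordinal q_le_m) dist_q).
Qed.

Lemma R_leq_RDist_mul s D m N : 2 <= size s -> all (fun x => 0 < x) s ->
  (forall i m', i < size s -> R (rem_nth s i) D m' <= N) ->
  R s D m <= RDist s D m * (size s * size s * N).
Proof.
case: s => [//|x s] size_s pos_s le_N; rewrite leqNgt; apply/negP => big.
have c_pos k : k < (size s).+1 -> 0 < nth 0 (x :: s) k.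
  by move=> lt_k; apply: (allP pos_s); rewrite mem_nth.
have fiber (i : 'I_(size s).+1) (u : 'I_m.+1) :
    #|[set d in solutions (size s).+1 (nth 0 (x :: s)) D m | d i == u]| <= N.
  apply: leq_trans (card_solutions_fiber D i u c_pos) _.
  by rewrite -(@R_rem_nth (x :: s)) ?le_N.
have [L [size_L sub_L disj_L]] := exists_disjoint_rows fiber big.
have := @has_dist_disjoint_rows (x :: s) D m L sub_L disj_L.
by move/(has_dist_leq_RDist size_s); rewrite size_L ltnn.
Qed.

Definition bounded (g : nat -> nat) := exists B, forall m, g m <= B.

Lemma bounded_uniform n (g : nat -> nat -> nat) :
  (forall i, i < n -> bounded (g i)) -> exists B, forall i m, i < n -> g i m <= B.
Proof.
elim: n => [|n IH] bnd; first by exists 0.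
have [B1 le_B1] := IH (fun i lt_in => bnd i (ltnW lt_in)).
have [B2 le_B2] := bnd n (ltnSn n).
exists (maxn B1 B2) => i m; rewrite ltnS leq_eqVlt => /orP[/eqP -> | lt_in].
  exact: leq_trans (le_B2 m) (leq_maxr _ _).
exact: leq_trans (le_B1 i m lt_in) (leq_maxl _ _).
Qed.

Lemma bounded_R_of_subseqs s D : all (fun x => 0 < x) s ->
  (forall s', subseq s' s -> 2 <= size s' -> bounded (RDist s' D)) ->
  bounded (R s D).
Proof.
have [n] := ubnP (size s); elim: n s => // n IH s; rewrite ltnS => size_s pos_s bnd.
have [le_s1 | size2] := leqP (size s) 1; first by exists 1 => m; exact: R_le1.
have bnd_rem i : i < size s -> bounded (R (rem_nth s i) D).
  move=> lt_is; apply: IH.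
  - by rewrite size_rem_nth //; case: (size s) size_s lt_is.
  - by apply/allP => y /(mem_subseq (subseq_rem_nth s i)); apply: (allP pos_s).
  by move=> s' sub_s'; apply: bnd; apply: subseq_trans sub_s' (subseq_rem_nth s i).
have [B le_B] := bnd s (subseq_refl s) size2.
have [N le_N] := bounded_uniform bnd_rem.
exists (B * (size s * size s * N)) => m.
by rewrite (leq_trans (R_leq_RDist_mul m size2 pos_s le_N)) // leq_mul2r le_B orbT.
Qed.

Lemma RDist0 f D : RDist f D 0 = 0.
Proof. by apply/eqP; rewrite -leqn0; apply/bigmax_leqP => -[[|]]. Qed.

Lemma unbounded_RDist f D : ~ bounded (RDist f D) -> unbounded (RDist f D).
Proof.
move=> unb N; apply: NNPP => none; apply: unb; exists N => m.
rewrite leqNgt; apply/negP => lt_N; apply: none; exists m; split; last exact: ltnW.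
by case: m lt_N => //; rewrite RDist0.
Qed.

Theorem mainTheorem9 (h : nat) (D : pred nat) :
  2 <= h ->
  (forall d, D d -> 0 < d) ->
  (exists f : seq nat,
      [/\ 2 <= size f <= 2 * h - 1, all (fun x => 0 < x) f,
          sumn f <= 2 * h & unbounded (R f D)]) ->
  exists f' : seq nat,
      [/\ 2 <= size f' <= 2 * h - 1, all (fun x => 0 < x) f',
          sumn f' <= 2 * h & unbounded (RDist f' D)].
Proof.
move=> _ _ [f [/andP[_ size_f] pos_f sum_f unb_f]].
have [s [sub_s size_s unb_s]] :
    exists s, [/\ subseq s f, 2 <= size s & ~ bounded (RDist s D)].
  apply: NNPP => none; have [B le_B] : bounded (R f D).
    apply: bounded_R_of_subseqs pos_f _ => s sub_s size_s.
    by apply: NNPP => unb_s; apply: none; exists s.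
  by have [m [_]] := unb_f B.+1; rewrite leqNgt ltnS le_B.
exists s; split.
- by rewrite size_s (leq_trans (size_subseq sub_s)).
- by apply/allP => y /(mem_subseq sub_s); apply: (allP pos_f).
- exact: leq_trans (leq_sumn_subseq sub_s) sum_f.
- exact: unbounded_RDist.
Qed.
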